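(* Let $T$ be a Fano tetrahedron in $\mathbb{Z}^3$ with vertices $x_1=(1,0,0)$, $x_2=(0,1,0)$, $x_3=(k''\lambda_4-a\lambda_1,\ k'\lambda_4-a\lambda_2,\ k\lambda_4)$, $x_4=(-k''\lambda_3-b\lambda_1,\ -k'\lambda_3-b\lambda_2,\ -k\lambda_3)$, where $\lambda_1\le\cdots\le\lambda_4$ are non-negative integers with $\gcd(\lambda_1,\ldots,\lambda_4)=1$ and $\sum_i\lambda_ix_i=0$, $a,b\in\mathbb{Z}$ with $a>0$ and $a\lambda_3+b\lambda_4=1$, and $k,k',k''\in\mathbb{N}$ with $0\le k''\lambda_4-a\lambda_1<k\lambda_4$ and $0\le k'\lambda_4-a\lambda_2<k\lambda_4$. Suppose that $k''\lambda_4-a\lambda_1=0$ or $k'\lambda_4-a\lambda_2=0$. Then $T$ is equivalent under $GL(3,\mathbb{Z})$ to the tetrahedron with vertices $e_1,e_2,e_3,-e_1-e_2-e_3$.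
   Context: A tetrahedron is called Fano if its vertices lie in $\mathbb{Z}^3$ and the only lattice point it contains other than its vertices is the origin, which lies strictly in its interior. $e_1,e_2,e_3$ is the standard basis of $\mathbb{Z}^3$. *)

From mathcomp Require Import all_boot all_order all_algebra.
Set Implicit Arguments. Unset Strict Implicit. Unset Printing Implicit Defensive.
Import Order.TTheory GRing.Theory Num.Theory.
Local Open Scope ring_scope.

Definition vec3 (a b c : int) : 'rV[int]_3 := \row_(j < 3) nth 0 [:: a; b; c] j.

Definition tet (v1 v2 v3 v4 : 'rV[int]_3) : 'I_4 -> 'rV[int]_3 :=
  fun i => nth 0 [:: v1; v2; v3; v4] i.

Definition ratv (v : 'rV[int]_3) : 'rV[rat]_3 := map_mx (fun z : int => z%:~R) v.

Definition in_hull (X : 'I_4 -> 'rV[int]_3) (p : 'rV[int]_3) : Prop :=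
  exists mu : 'I_4 -> rat, (forall i, 0 <= mu i) /\ \sum_i mu i = 1 /\
    ratv p = \sum_i mu i *: ratv (X i).

Definition in_open_simplex (X : 'I_4 -> 'rV[int]_3) (p : 'rV[int]_3) : Prop :=
  exists mu : 'I_4 -> rat, (forall i, 0 < mu i) /\ \sum_i mu i = 1 /\
    ratv p = \sum_i mu i *: ratv (X i).

Definition full_dim (X : 'I_4 -> 'rV[int]_3) : Prop :=
  \det (\matrix_(i < 3) (X (lift ord0 i) - X ord0)) != 0.

Definition fano (X : 'I_4 -> 'rV[int]_3) : Prop :=
  [/\ full_dim X, in_open_simplex X 0 &
      forall p, in_hull X p -> p = 0 \/ exists i, p = X i].

(* GL(3,Z)-equivalence: a unimodular integer matrix maps the vertex set of X
   onto the vertex set of Y (row-vector convention x |-> x *m U). *)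
Definition GL3Z_equiv (X Y : 'I_4 -> 'rV[int]_3) : Prop :=
  exists U : 'M[int]_3, U \in unitmx /\
    perm_eq [seq X i *m U | i <- enum 'I_4] [seq Y i | i <- enum 'I_4].

(* The Fano condition forces the apex x3 = (c1, c2, K) to have height K = k l4 = 1.
   Otherwise, if say c1 = 0, the lattice point (0, [c2 > 0], 1) is a combination of
   e2 and x3 with nonnegative weights of sum at most 1, so it lies in T (because 0
   does), although it is neither 0 nor a vertex.  Hence k = l4 = 1 and every
   lambda_i is at most 1.  If lambda_1 = 0, then k'' = 0 and all vertices lie in the
   half-space x_1 >= 0, contradicting that 0 is interior; so all lambda_i = 1, which
   forces x3 = e3 and x4 = -e1-e2-e3, and the identity matrix is the equivalence. *)

From mathcomp Require Import all_boot all_order all_algebra zify.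
Import Order.TTheory GRing.Theory Num.Theory.
Local Open Scope ring_scope.

Lemma big_ord4 (V : nmodType) (F : 'I_4 -> V) :
  \sum_i F i =
  F (@Ordinal 4 0 isT) + F (@Ordinal 4 1 isT) + F (@Ordinal 4 2 isT) + F (@Ordinal 4 3 isT).
Proof.
rewrite !big_ord_recr big_ord0 /= add0r.
by congr (_ + _ + _ + _); congr F; apply: val_inj.
Qed.

Lemma ratvZ (c : int) (v : 'rV[int]_3) : ratv (c *: v) = c%:~R *: ratv v.
Proof. by apply/rowP => j; rewrite !mxE intrM. Qed.

Lemma ratv_sum (I : Type) (r : seq I) (F : I -> 'rV[int]_3) :
  ratv (\sum_(i <- r) F i) = \sum_(i <- r) ratv (F i).
Proof.
apply/rowP => j; rewrite !mxE !summxE rmorph_sum.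
by apply: eq_bigr => i _; rewrite mxE.
Qed.

Lemma ratv0 : ratv 0 = 0.
Proof. by apply/rowP => j; rewrite !mxE. Qed.

(* Put the missing weight on the convex combination representing 0. *)
Lemma in_hull_subconvex (X : 'I_4 -> 'rV[int]_3) (p : 'rV[int]_3) (t : 'I_4 -> rat) :
  in_open_simplex X 0 -> (forall i, 0 <= t i) -> \sum_i t i <= 1 ->
  ratv p = \sum_i t i *: ratv (X i) -> in_hull X p.
Proof.
move=> [mu [mu_gt0 [mu_sum mu_0]]] t_ge0 t_sum p_comb.
pose s := 1 - \sum_i t i.
exists (fun i => t i + s * mu i); split; [|split].
- move=> i; rewrite addr_ge0 // mulr_ge0 ?subr_ge0 //; exact: ltW.
- by rewrite big_split /= -mulr_sumr mu_sum mulr1 /s addrC subrK.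
- under eq_bigr do rewrite scalerDl -scalerA.
  by rewrite big_split /= -scaler_sumr -mu_0 p_comb ratv0 scaler0 addr0.
Qed.

Lemma fano_scaled_lattice_point (X : 'I_4 -> 'rV[int]_3) (p : 'rV[int]_3)
    (K : int) (s : 'I_4 -> int) :
  fano X -> 0 < K -> (forall i, 0 <= s i) -> \sum_i s i <= K ->
  K *: p = \sum_i s i *: X i -> p = 0 \/ exists i, p = X i.
Proof.
move=> [_ X0 X_lattice] K_gt0 s_ge0 s_sum Kp.
have K_neq0 : (K%:~R : rat) != 0 by rewrite intr_eq0 gt_eqF.
apply/X_lattice/(@in_hull_subconvex _ _ (fun i => (s i)%:~R / K%:~R)) => //.
- by move=> i; rewrite divr_ge0 ?ler0z // ltW.
- by rewrite -mulr_suml -rmorph_sum ler_pdivrMr ?ltr0z // mul1r ler_int.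
- apply: (scalerI K_neq0); rewrite -ratvZ Kp ratv_sum scaler_sumr.
  by apply: eq_bigr => i _; rewrite ratvZ scalerA mulrC divfK.
Qed.

Lemma open_simplex0_nonneg_coord (X : 'I_4 -> 'rV[int]_3) (j : 'I_3) :
  in_open_simplex X 0 -> (forall i, 0 <= X i 0 j) -> forall i, X i 0 j = 0.
Proof.
move=> [mu [mu_gt0 [_ mu_0]]] X_ge0 i.
have terms_ge0 k : 0 <= mu k * (X k 0 j)%:~R by rewrite mulr_ge0 ?ler0z // ltW.
have coord_j0 : \sum_k mu k * (X k 0 j)%:~R = 0.
  move/(congr1 (fun v : 'rV[rat]_3 => v 0 j)): mu_0; rewrite ratv0 summxE mxE => coord_j.
  by rewrite [RHS]coord_j; apply: eq_bigr => k _; rewrite !mxE.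
have /eqP := @psumr_eq0P _ _ _ _ (fun k _ => terms_ge0 k) coord_j0 i isT.
by rewrite mulf_eq0 gt_eqF //= intr_eq0 => /eqP.
Qed.

Section UnitApex.

Variables (c1 c2 K d1 d2 d3 : int).
Hypotheses (c1_range : 0 <= c1 < K) (c2_range : 0 <= c2 < K) (d3_le0 : d3 <= 0).

Let T := tet (vec3 1 0 0) (vec3 0 1 0) (vec3 c1 c2 K) (vec3 d1 d2 d3).

Lemma height_one_not_vertex (p : 'rV[int]_3) :
  p 0 (@Ordinal 3 2 isT) = 1 -> K != 1 -> ~ (p = 0 \/ exists i, p = T i).
Proof.
move=> p_height K_neq1 [p0 | [[[|[|[|[|//]]]] ?] p_vertex]];
  move: p_height; rewrite ?p0 ?p_vertex /T /= !mxE //=.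
- by move=> K1; rewrite K1 in K_neq1.
- lia.
Qed.

Lemma fano_unit_apex : (c1 = 0 \/ c2 = 0) -> fano T -> K = 1.
Proof.
move=> c12_0 T_fano; apply/eqP; apply: contraT => K_neq1; exfalso.
have [δ1 [δ2 [s1_ge0 s2_ge0 s_sum]]] : exists δ1 δ2 : int,
    [/\ 0 <= δ1 * K - c1, 0 <= δ2 * K - c2 & (δ1 + δ2) * K + 1 <= K + c1 + c2].
  case: c12_0 => [c1_0 | c2_0].
  - by have [c2_0 | c2_neq0] := eqVneq c2 0; [exists 0, 0 | exists 0, 1]; split; lia.
  - by have [c1_0 | c1_neq0] := eqVneq c1 0; [exists 0, 0 | exists 1, 0]; split; lia.
(* K (δ1, δ2, 1) = (δ1 K - c1) e1 + (δ2 K - c2) e2 + x3 *)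
apply: (@height_one_not_vertex (vec3 δ1 δ2 1)); rewrite ?mxE //.
pose s (i : 'I_4) := nth 0 [:: δ1 * K - c1; δ2 * K - c2; 1; 0] (nat_of_ord i).
apply: (@fano_scaled_lattice_point T _ K s T_fano); first by lia.
- by case=> [[|[|[|[|//]]]] ?] /=.
- by rewrite big_ord4 /s /=; lia.
- apply/rowP => j; rewrite summxE big_ord4 !mxE /s /=.
  by case: j => [[|[|[|//]]] ?] /=; lia.
Qed.

End UnitApex.

Theorem proposition3p2 (l1 l2 l3 l4 : nat) (a b : int) (k k' k'' : nat) :
  (l1 <= l2)%N -> (l2 <= l3)%N -> (l3 <= l4)%N ->
  gcdn (gcdn (gcdn l1 l2) l3) l4 = 1%N ->
  0 < a -> a * l3%:Z + b * l4%:Z = 1 ->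
  let x1 := vec3 1 0 0 in
  let x2 := vec3 0 1 0 in
  let x3 := vec3 (k''%:Z * l4%:Z - a * l1%:Z) (k'%:Z * l4%:Z - a * l2%:Z)
                 (k%:Z * l4%:Z) in
  let x4 := vec3 (- (k''%:Z * l3%:Z) - b * l1%:Z) (- (k'%:Z * l3%:Z) - b * l2%:Z)
                 (- (k%:Z * l3%:Z)) in
  l1%:Z *: x1 + l2%:Z *: x2 + l3%:Z *: x3 + l4%:Z *: x4 = 0 ->
  0 <= k''%:Z * l4%:Z - a * l1%:Z < k%:Z * l4%:Z ->
  0 <= k'%:Z * l4%:Z - a * l2%:Z < k%:Z * l4%:Z ->
  fano (tet x1 x2 x3 x4) ->
  (k''%:Z * l4%:Z - a * l1%:Z = 0 \/ k'%:Z * l4%:Z - a * l2%:Z = 0) ->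
  GL3Z_equiv (tet x1 x2 x3 x4)
    (tet (vec3 1 0 0) (vec3 0 1 0) (vec3 0 0 1) (vec3 (-1) (-1) (-1))).
Proof.
move=> l12 l23 l34 _ _ ab1 x1 x2 x3 x4 _ c1_range c2_range T_fano c12_0.
have kl4_1 : k%:Z * l4%:Z = 1.
  by apply: fano_unit_apex c1_range c2_range _ c12_0 T_fano; lia.
have /eqP : (k * l4 = 1)%N by move: kl4_1; rewrite -PoszM => -[].
rewrite muln_eq1 => /andP [/eqP k1 /eqP l4_1].
subst k l4.
have l1_1 : l1 = 1%N.
  have [l1_0 | //] : l1 = 0%N \/ l1 = 1%N by lia.
  have [_ zero_inside _] := T_fano.
  have k''0 : k'' = 0%N by subst l1; lia.
  have first_coord_nonneg i : 0 <= tet x1 x2 x3 x4 i 0 ord0.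
    by case: i => [[|[|[|[|//]]]] ?]; rewrite /= !mxE /=; subst l1 k''; lia.
  by have := open_simplex0_nonneg_coord _ _ zero_inside first_coord_nonneg ord0; rewrite !mxE.
have [l2_1 l3_1] : l2 = 1%N /\ l3 = 1%N by lia.
subst l1 l2 l3.
have -> : x3 = vec3 0 0 1 by rewrite /x3; congr vec3; lia.
have -> : x4 = vec3 (-1) (-1) (-1) by rewrite /x4; congr vec3; lia.
exists 1%:M; split; first exact: unitmx1.
by under eq_map do rewrite mulmx1.
Qed.
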